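(* Let $L$ be a simple Lie algebra over a field $K$ of characteristic $\neq 2$ such that $\mathrm{HomLie}(L)$ is closed with respect to the anticommutator $\varphi * \psi = \frac12(\varphi\circ\psi+\psi\circ\varphi)$. Then either $\mathrm{HomLie}(L) = \mathrm{Cent}(L)$, or $L$ is isomorphic to a subalgebra of the Lie algebra $\mathrm{Der}(\mathrm{HomLie}(L))$ of derivations of the Jordan algebra $(\mathrm{HomLie}(L), * )$.
   Context: A Hom-Lie structure on a Lie algebra $L$ is a linear map $\varphi: L \to L$ satisfying $[[x,y],\varphi(z)] + [[z,x],\varphi(y)] + [[y,z],\varphi(x)] = 0$ for all $x,y,z \in L$; $\mathrm{HomLie}(L)$ is the space of all of them. The centroid $\mathrm{Cent}(L)$ is the space of linear maps $\varphi: L\to L$ with $\varphi([x,y]) = [\varphi(x),y]$ for all $x,y \in L$. *)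

(* Lie algebras over a field K, possibly infinite-dimensional:
   the underlying K-vector space is an lmodType K and the bracket is a map br. *)
From mathcomp Require Import all_boot all_algebra.
Set Implicit Arguments. Unset Strict Implicit. Unset Printing Implicit Defensive.
Import GRing.Theory.
Local Open Scope ring_scope.

Section LieDefs.
Variables (K : fieldType) (V : lmodType K).

Definition is_lin (f : V -> V) : Prop :=
  forall (a : K) (u v : V), f (a *: u + v) = a *: f u + f v.

Definition lie_algebra (br : V -> V -> V) : Prop :=
  [/\ (forall (a : K) x y z, br (a *: x + y) z = a *: br x z + br y z),
      (forall (a : K) x y z, br z (a *: x + y) = a *: br z x + br z y),
      (forall x, br x x = 0) &
      (forall x y z, br x (br y z) + br y (br z x) + br z (br x y) = 0)].

Definition lie_ideal (br : V -> V -> V) (I : V -> Prop) : Prop :=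
  [/\ I 0,
      (forall (a : K) x y, I x -> I y -> I (a *: x + y)) &
      (forall x y, I x -> I (br y x))].

Definition simple_lie (br : V -> V -> V) : Prop :=
  [/\ lie_algebra br,
      (exists x y, br x y != 0) &
      (forall I, lie_ideal br I -> (forall x, I x -> x = 0) \/ (forall x, I x))].

Definition homlie (br : V -> V -> V) (phi : V -> V) : Prop :=
  is_lin phi /\
  forall x y z, br (br x y) (phi z) + br (br z x) (phi y) + br (br y z) (phi x) = 0.

Definition centroid (br : V -> V -> V) (phi : V -> V) : Prop :=
  is_lin phi /\ forall x y, phi (br x y) = br (phi x) y.

Definition jprod (phi psi : V -> V) : V -> V :=
  fun v => (2%:R : K)^-1 *: (phi (psi v) + psi (phi v)).

Definition homlie_jordan_der (br : V -> V -> V) (D : (V -> V) -> (V -> V)) : Prop :=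
  [/\ (forall phi, homlie br phi -> homlie br (D phi)),
      (forall (a : K) phi psi, homlie br phi -> homlie br psi ->
         D (fun v => a *: phi v + psi v) = (fun v => a *: D phi v + D psi v)) &
      (forall phi psi, homlie br phi -> homlie br psi ->
         D (jprod phi psi) = (fun v => jprod (D phi) psi v + jprod phi (D psi) v))].

(* L is isomorphic to a Lie subalgebra of Der(HomLie(L), * ) (bracket = commutator):
   an injective Lie algebra homomorphism f from L to the derivations, where
   derivations are compared by their values on HomLie(L). *)
Definition embeds_in_homlie_der (br : V -> V -> V) : Prop :=
  exists f : V -> (V -> V) -> (V -> V),
    [/\ (forall x, homlie_jordan_der br (f x)),
        (forall (a : K) x y phi, homlie br phi ->
           f (a *: x + y) phi = (fun v => a *: f x phi v + f y phi v)),
        (forall x y phi, homlie br phi ->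
           f (br x y) phi = (fun v => f x (f y phi) v - f y (f x phi) v)) &
        (forall x y, (forall phi, homlie br phi -> f x phi = f y phi) -> x = y)].

End LieDefs.

(* For a derivation D of L and a Hom-Lie structure phi, the commutator
   [D, phi] = D phi - phi D is again a Hom-Lie structure, and phi |-> [ad x, phi]
   is a derivation of the Jordan product. Hence the x whose adjoint commutes with
   every Hom-Lie structure form an ideal of L. If this ideal is L, every Hom-Lie
   structure commutes with all ad x, i.e. lies in the centroid (and centroid
   elements are Hom-Lie by the Jacobi identity). If it is 0, then
   x |-> [ad x, -] is an injective Lie homomorphism into Der(HomLie(L), * ),
   since ad [x, y] = [ad x, ad y]. *)

From mathcomp Require Import all_boot all_algebra.
From Stdlib Require Import FunctionalExtensionality.
Set Implicit Arguments. Unset Strict Implicit. Unset Printing Implicit Defensive.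
Import GRing.Theory.
Local Open Scope ring_scope.

Definition end_comm (V : zmodType) (D phi : V -> V) : V -> V :=
  fun v => D (phi v) - phi (D v).

Section LinearMaps.
Variables (K : fieldType) (V : lmodType K).

Section OneMap.
Variable f : V -> V.
Hypothesis f_lin : is_lin f.

Lemma lin0 : f 0 = 0.
Proof.
have := f_lin 1 0 0; rewrite !scale1r addr0 => /eqP.
by rewrite -subr_eq subrr eq_sym => /eqP.
Qed.

Lemma linD u v : f (u + v) = f u + f v.
Proof. by have := f_lin 1 u v; rewrite !scale1r. Qed.

Lemma linZ a u : f (a *: u) = a *: f u.
Proof. by have := f_lin a u 0; rewrite !addr0 lin0 addr0. Qed.

Lemma linN u : f (- u) = - f u.
Proof. by rewrite -scaleN1r linZ scaleN1r. Qed.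

Lemma linB u v : f (u - v) = f u - f v.
Proof. by rewrite linD linN. Qed.

End OneMap.

Lemma is_lin_end_comm (D phi : V -> V) : is_lin D -> is_lin phi -> is_lin (end_comm D phi).
Proof.
move=> Dlin phi_lin a u v; rewrite /end_comm Dlin phi_lin (linD phi_lin) (linZ phi_lin).
by rewrite (linD Dlin) (linZ Dlin) scalerBr opprD addrACA.
Qed.

Section EndComm.
Variables (D E phi psi : V -> V).
Hypotheses (D_lin : is_lin D) (E_lin : is_lin E).
Hypotheses (phi_lin : is_lin phi) (psi_lin : is_lin psi).

Lemma end_comm_jprod :
  end_comm D (jprod phi psi) =1
  fun v => jprod (end_comm D phi) psi v + jprod phi (end_comm D psi) v.
Proof.
move=> v; rewrite /jprod /end_comm (linZ D_lin) (linD D_lin) -!scalerDr -scalerBr.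
rewrite (linB phi_lin) (linB psi_lin); congr (_ *: _).
rewrite opprD !addrA [RHS](ACl (1*7*6*4*(2*5)*(3*8))) /=.
by rewrite addNr subrr !addr0.
Qed.

Lemma end_comm_linearr a :
  end_comm D (fun v => a *: phi v + psi v) =1
  fun v => a *: end_comm D phi v + end_comm D psi v.
Proof. by move=> v; rewrite /end_comm D_lin scalerBr opprD addrACA. Qed.

Lemma eq_end_comml D' : D =1 D' -> end_comm D phi =1 end_comm D' phi.
Proof. by move=> eqD v; rewrite /end_comm !eqD. Qed.

Lemma end_comm_linearl a :
  end_comm (fun v => a *: D v + E v) phi =1
  fun v => a *: end_comm D phi v + end_comm E phi v.
Proof. by move=> v; rewrite /end_comm phi_lin scalerBr opprD addrACA. Qed.

Lemma end_comm_commutator :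
  end_comm (end_comm D E) phi =1
  fun v => end_comm D (end_comm E phi) v - end_comm E (end_comm D phi) v.
Proof.
move=> v; rewrite /end_comm !(linB D_lin) !(linB E_lin) (linB phi_lin).
rewrite !opprD !opprK !addrA [RHS](ACl (1*5*8*4*(2*7)*(3*6))) /=.
by rewrite !addNr !addr0.
Qed.

End EndComm.

End LinearMaps.

Definition is_der (K : fieldType) (V : lmodType K) (br : V -> V -> V) (D : V -> V) : Prop :=
  is_lin D /\ forall u w, D (br u w) = br (D u) w + br u (D w).

Definition hl_term (V : zmodType) (br : V -> V -> V) (phi : V -> V) (x y z : V) : V :=
  br (br x y) (phi z).

Lemma addr_sub3_regroup (M : zmodType) (a1 a2 a3 b1 b2 b3 c1 c2 c3 d1 d2 d3 : M) :
  (a1 - b1 - c1 - d1) + (a2 - b2 - c2 - d2) + (a3 - b3 - c3 - d3) =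
  (a1 + a2 + a3) - (b1 + c2 + d3) - (c1 + d2 + b3) - (d1 + b2 + c3).
Proof. by rewrite !opprD !addrA [LHS](ACl (1*5*9*2*7*12*3*8*10*4*6*11)). Qed.

Section LieAlgebra.
Variables (K : fieldType) (V : lmodType K) (br : V -> V -> V).
Hypothesis lie : lie_algebra br.

Lemma is_lin_brl z : is_lin (br^~ z).
Proof. by case: lie => brl _ _ _ a x y; apply: brl. Qed.

Lemma is_lin_brr z : is_lin (br z).
Proof. by case: lie => _ brr _ _ a x y; apply: brr. Qed.

Lemma brC u w : br u w = - br w u.
Proof.
case: (lie) => _ _ brxx _; apply/eqP; rewrite -addr_eq0; apply/eqP.
have := brxx (u + w).
by rewrite (linD (is_lin_brl _)) !(linD (is_lin_brr _)) !brxx add0r addr0.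
Qed.

Lemma jacobi_ad x y w : br x (br y w) = br (br x y) w + br y (br x w).
Proof.
case: (lie) => _ _ _ /(_ x y w) J.
rewrite [br (br x y) w]brC [br x w]brC (linN (is_lin_brr y)) -opprD.
by apply/eqP; rewrite -addr_eq0 (addrC (br w _)) addrA J.
Qed.

Lemma is_der_ad x : is_der br (br x).
Proof. by split=> [|u w]; [exact: is_lin_brr | exact: jacobi_ad]. Qed.

Lemma br_end_comm_ad x y : br (br x y) =1 end_comm (br x) (br y).
Proof. by move=> w; rewrite /end_comm jacobi_ad addrK. Qed.

Lemma brl_linear a x y : br (a *: x + y) =1 fun v => a *: br x v + br y v.
Proof. by move=> v; apply: is_lin_brl. Qed.

Lemma hl_term_end_comm D phi x y z : is_der br D ->
  hl_term br (end_comm D phi) x y z =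
  D (hl_term br phi x y z) - hl_term br phi (D x) y z - hl_term br phi x (D y) z
  - hl_term br phi x y (D z).
Proof.
case=> _ Dder; rewrite /hl_term /end_comm (linB (is_lin_brr _)) !Dder.
rewrite (linD (is_lin_brl _)) [RHS](ACl (3*6*(1*4)*(2*5))) /=.
by rewrite !subrr !addr0.
Qed.

Lemma homlie_end_comm D phi : is_der br D -> homlie br phi -> homlie br (end_comm D phi).
Proof.
move=> Dder [phi_lin phiJ]; split; first exact: is_lin_end_comm Dder.1 phi_lin.
move=> x y z.
change (hl_term br (end_comm D phi) x y z + hl_term br (end_comm D phi) z x y
  + hl_term br (end_comm D phi) y z x = 0).
(* The three subtracted groups are the Hom-Lie identities of [phi] at
   [(D x, y, z)], [(x, D y, z)] and [(x, y, D z)]. *)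
rewrite !hl_term_end_comm // addr_sub3_regroup -!(linD Dder.1) /hl_term.
by rewrite !phiJ (lin0 Dder.1) !subrr.
Qed.

Lemma centroid_homlie phi : centroid br phi -> homlie br phi.
Proof.
case=> phi_lin phi_br; split=> // x y z.
rewrite [br (br x y) _]brC [br (br z x) _]brC [br (br y z) _]brC -!phi_br -!opprD.
rewrite -(linD phi_lin) -(linD phi_lin) [X in phi X](ACl (3*2*1)) /=.
by case: lie => _ _ _ ->; rewrite (lin0 phi_lin) oppr0.
Qed.

Definition homlie_commutant (x : V) : Prop :=
  forall phi, homlie br phi -> end_comm (br x) phi =1 fun=> 0.

Lemma lie_ideal_homlie_commutant : lie_ideal br homlie_commutant.
Proof.
split.
- move=> phi [phi_lin _] v.
  by rewrite /end_comm (lin0 (is_lin_brl _)) (lin0 (is_lin_brl _)) (lin0 phi_lin) subr0.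
- move=> a x y Cx Cy phi hphi v.
  rewrite (eq_end_comml _ (brl_linear a x y)) (end_comm_linearl _ _ hphi.1).
  by rewrite Cx // Cy // scaler0 addr0.
- move=> x y Cx phi hphi v.
  have hphi_y := homlie_end_comm (is_der_ad y) hphi.
  rewrite (eq_end_comml _ (br_end_comm_ad y x)).
  rewrite (end_comm_commutator (is_lin_brr y) (is_lin_brr x) hphi.1) (Cx _ hphi_y) subr0.
  by rewrite {1}/end_comm !Cx // (lin0 (is_lin_brr _)) subr0.
Qed.

Lemma homlie_commutant_sub x y :
  (forall phi, homlie br phi -> end_comm (br x) phi = end_comm (br y) phi) ->
  homlie_commutant (x - y).
Proof.
move=> eq_xy phi hphi v; rewrite -scaleN1r addrC.
rewrite (eq_end_comml _ (brl_linear _ _ _)) (end_comm_linearl _ _ hphi.1).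
by rewrite eq_xy // scaleN1r addNr.
Qed.

Lemma homlie_jordan_der_ad x : homlie_jordan_der br (end_comm (br x)).
Proof.
split=> [phi|a phi psi hphi hpsi|phi psi hphi hpsi].
- exact: homlie_end_comm (is_der_ad x).
- exact/functional_extensionality/end_comm_linearr/is_lin_brr.
- apply: functional_extensionality.
  exact: end_comm_jprod (is_lin_brr x) hphi.1 hpsi.1.
Qed.

Lemma ad_embeds_in_homlie_der :
  (forall x, homlie_commutant x -> x = 0) -> embeds_in_homlie_der br.
Proof.
move=> commutant0; exists (fun x => end_comm (br x)); split.
- exact: homlie_jordan_der_ad.
- move=> a x y phi hphi; apply: functional_extensionality => v.
  by rewrite (eq_end_comml _ (brl_linear a x y)) (end_comm_linearl _ _ hphi.1).
- move=> x y phi hphi; apply: functional_extensionality => v.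
  rewrite (eq_end_comml _ (br_end_comm_ad x y)).
  exact: end_comm_commutator (is_lin_brr x) (is_lin_brr y) hphi.1 v.
- move=> x y eq_xy; apply/eqP; rewrite -subr_eq0; apply/eqP.
  exact/commutant0/homlie_commutant_sub.
Qed.

Lemma homlie_centroid_of_commutant_full :
  (forall x, homlie_commutant x) -> forall phi, homlie br phi <-> centroid br phi.
Proof.
move=> commutant_full phi; split; last exact: centroid_homlie.
move=> hphi; split=> [|x y]; first exact: hphi.1.
have /eqP := commutant_full y phi hphi x; rewrite subr_eq0 => /eqP phi_ad.
by rewrite brC (linN hphi.1) -phi_ad -brC.
Qed.

End LieAlgebra.

Theorem corollary2p7 (K : fieldType) (V : lmodType K) (br : V -> V -> V) :
  (2%:R : K) != 0 ->
  simple_lie br ->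
  (forall phi psi, homlie br phi -> homlie br psi -> homlie br (jprod phi psi)) ->
  (forall phi, homlie br phi <-> centroid br phi) \/ embeds_in_homlie_der br.
Proof.
move=> _ [lie _ simple] _.
case: (simple _ (lie_ideal_homlie_commutant lie)) => [commutant0 | commutant_full].
  by right; exact: ad_embeds_in_homlie_der.
by left; exact: homlie_centroid_of_commutant_full.
Qed.
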